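(* (i) Let $h:\omega\to\omega\setminus\{0,1\}$ be nondecreasing and $g(n)=h(2n)$. Then $\mathfrak d(\neq^*,h)=\mathfrak d(\neq^*,g)$ and $\mathfrak b(\neq^*,h)=\mathfrak b(\neq^*,g)$. (ii) For all real numbers $a,b>1$, $\mathfrak d(\neq^*,n\mapsto2^{(a^n)})=\mathfrak d(\neq^*,n\mapsto2^{(b^n)})$ and $\mathfrak b(\neq^*,n\mapsto2^{(a^n)})=\mathfrak b(\neq^*,n\mapsto2^{(b^n)})$.
   Context: For a function $h$, a function $y:\omega\to\omega$ is $h$-bounded if $y(n)<h(n)$ for all $n$. $\mathfrak d(\neq^*,h)$ is the least cardinality of a set $G$ of $h$-bounded functions such that for every $x\in{}^\omega\omega$ there is $y\in G$ with $x(n)\neq y(n)$ for all but finitely many $n$. $\mathfrak b(\neq^*,h)$ is the least cardinality of a set $F\subseteq{}^\omega\omega$ such that for every $h$-bounded $y$ there is $x\in F$ with $x(n)=y(n)$ for infinitely many $n$. The statements are theorems of ZFC. *)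

From HB Require Import structures.
From mathcomp Require Import all_boot all_order all_algebra.
From mathcomp Require Import all_classical all_reals all_analysis.
Set Implicit Arguments. Unset Strict Implicit. Unset Printing Implicit Defensive.
Import Order.TTheory GRing.Theory Num.Theory.
Local Open Scope classical_set_scope.
Local Open Scope ring_scope.
Local Open Scope card_scope.

(* The bound H of "H-bounded" is allowed to be real valued, so that the
   bounds n |-> 2^(a^n) of part (ii) can be used literally.  For a
   nat-valued h we use H n = (h n)%:R. *)
Definition bounded_by (R : realType) (H : nat -> R) (y : nat -> nat) : Prop :=
  forall n : nat, ((y n)%:R : R) < H n.

Definition d_family (R : realType) (H : nat -> R) (G : set (nat -> nat)) : Prop :=
  (forall y, G y -> bounded_by H y) /\
  (forall x : nat -> nat, exists y, G y /\
      exists N : nat, forall n : nat, (N <= n)%N -> x n <> y n).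

Definition b_family (R : realType) (H : nat -> R) (F : set (nat -> nat)) : Prop :=
  forall y : nat -> nat, bounded_by H y ->
    exists x, F x /\ forall N : nat, exists n : nat, (N <= n)%N /\ x n = y n.

(* d(neq*,H1) <= d(neq*,H2): every witness for H2 has a witness for H1 of
   at most its cardinality. (Cardinals are the least sizes of witnesses.) *)
Definition d_le (R : realType) (H1 H2 : nat -> R) : Prop :=
  forall G2, d_family H2 G2 -> exists G1, d_family H1 G1 /\ G1 #<= G2.
Definition d_eq (R : realType) (H1 H2 : nat -> R) : Prop :=
  d_le H1 H2 /\ d_le H2 H1.

Definition b_le (R : realType) (H1 H2 : nat -> R) : Prop :=
  forall F2, b_family H2 F2 -> exists F1, b_family H1 F1 /\ F1 #<= F2.
Definition b_eq (R : realType) (H1 H2 : nat -> R) : Prop :=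
  b_le H1 H2 /\ b_le H2 H1.

From HB Require Import structures.
From mathcomp Require Import all_boot all_order all_algebra.
From mathcomp Require Import all_classical all_reals all_analysis.
From mathcomp Require Import zify lra.
Import Order.TTheory GRing.Theory Num.Theory.
Set Implicit Arguments. Unset Strict Implicit. Unset Printing Implicit Defensive.

(* For nondecreasing h and g = h o (n |-> 2n), the inequalities h <= g give
   d(neq*,g) <= d(neq*,h) and b(neq*,h) <= b(neq*,g) at once.  Conversely, x is
   eventually different from the interleaving of y and z as soon as its even
   and odd parts are eventually different from y and z respectively, and the
   interleaving of two g-bounded functions is h-bounded.  So interleaving a
   witness G for g with itself gives a witness for h of size |G x G| = |G|;
   here G is infinite and |A x A| = |A| for every infinite A (Hessenberg, by
   Zorn's lemma).  Dually, if neither the even nor the odd parts of a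
   b-witness for h form a b-witness for g, interleaving a counterexample for
   each gives a counterexample for the original witness.  For (ii), iterating
   (i) makes h equivalent to h o (n |-> 2^j n), and 2^(b^n) <= 2^(a^(2^j n))
   as soon as b <= a^(2^j). *)

Local Open Scope classical_set_scope.
Local Open Scope card_scope.

Section maximal_extension.
Variables (I X Y : Type) (dom : set I -> set X).
Hypothesis dom_mono : forall A B, A `<=` B -> dom A `<=` dom B.

(* A partial map is a pair (D, f) with f relevant only on dom D: dom is the
   identity for injections, and D |-> D `*` D for pairings on D. *)
Definition extends (p q : set I * (X -> Y)) : Prop :=
  p.1 `<=` q.1 /\ forall x, dom p.1 x -> p.2 x = q.2 x.

Lemma extends_refl p : extends p p.
Proof. by split. Qed.

Lemma extends_trans p q r : extends p q -> extends q r -> extends p r.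
Proof.
move=> [pq epq] [qr eqr]; split=> [|x px]; first exact: subset_trans qr.
by rewrite epq // eqr //; apply: dom_mono px.
Qed.

Lemma chain_glue (C : set (set I * (X -> Y))) c0 : C c0 ->
  total_on C extends ->
  exists g, forall c, C c -> forall x, dom c.1 x -> c.2 x = g x.
Proof.
move=> Cc0 totC.
have /choice[g gP] : forall x, exists y, forall c, C c -> dom c.1 x -> c.2 x = y.
  move=> x; have [[c [Cc cx]]|nx] := pselect (exists c, C c /\ dom c.1 x).
    exists (c.2 x) => c' Cc' c'x.
    by have [[_ ->]|[_ ->]] := totC c c' Cc Cc'.
  by exists (c0.2 x) => c Cc cx; exfalso; apply: nx; exists c.
by exists g => c Cc x; apply: gP.
Qed.

Variables (good : set (set I * (X -> Y))) (p0 : set I * (X -> Y)).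
Hypothesis good_p0 : good p0.
Hypothesis good_glue : forall C g, C !=set0 -> C `<=` good ->
  total_on C extends -> (forall c, C c -> forall x, dom c.1 x -> c.2 x = g x) ->
  good (\bigcup_(c in C) c.1, g).

Lemma maximal_extension :
  exists2 p, good p & forall q, good q -> extends p q -> q.1 `<=` p.1.
Proof.
pose R (s t : {p | good p}) := `[< extends (sval s) (sval t) >].
have [|||[p gp] pmax] := @ZL_preorder _ (exist _ p0 good_p0) R.
- by move=> s; apply/asboolP/extends_refl.
- by move=> r s t /asboolP rs /asboolP st; apply/asboolP; exact: extends_trans st.
- move=> A totA; have [[s0 As0]|A0] := pselect (exists s, A s); last first.
    by exists (exist _ p0 good_p0) => s As; exfalso; apply: A0; exists s.
  have totC : total_on (sval @` A) extends.
    move=> _ _ [s As <-] [t At <-].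
    by have [/asboolP|/asboolP] := totA s t As At; auto.
  have [g gP] := chain_glue (imageP sval As0) totC.
  have gu : good (\bigcup_(c in sval @` A) c.1, g).
    apply: good_glue gP => //; first by exists (sval s0); exists s0.
    by move=> _ [s _ <-]; exact: svalP s.
  exists (exist _ _ gu) => s As; apply/asboolP; split=> [x sx|x]; last exact: gP.
  by exists (sval s) => //; exists s.
- exists p => // q gq pq.
  by have /asboolP[] := pmax (exist _ q gq) (asboolT pq).
Qed.

End maximal_extension.

(* When applying this view, give U explicitly: inferring the pointed instance
   of the codomain (e.g. of a product type) otherwise does not terminate. *)
Lemma card_le_injP {T} {U : pointedType} (A : set T) (B : set U) :
  A #<= B <-> exists2 f : T -> U, set_fun A B f & set_inj A f.
Proof. by split=> [/pcard_leP/injfunPex|/injfunPex/pcard_leP]. Qed.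

Lemma card_le_total T U (A : set T) (B : set U) : A #<= B \/ B #<= A.
Proof.
elim/Ppointed: T => T in A *; first by rewrite !emptyE_subdef; left.
elim/Ppointed: U => U in B *; first by rewrite !emptyE_subdef; right.
pose good := [set p : set T * (T -> U) |
  [/\ p.1 `<=` A, set_fun p.1 B p.2 & set_inj p.1 p.2]].
have good0 : good (set0, point) by split=> // x y; rewrite inE.
have [[D f] [/= DA fB finj] Dmax] : exists2 p, good p &
    forall q, good q -> extends id p q -> q.1 `<=` p.1.
  apply: (@maximal_extension _ _ _ id (fun _ _ => id) _ _ good0).
  move=> C g _ Cgood totC gP; split=> /=.
  - by move=> x [c /Cgood[cA _ _] /cA].
  - move=> x [c Cc cx]; rewrite -(gP c Cc x cx).
    by have [_ + _] := Cgood c Cc; apply.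
  - move=> x y /set_mem[c Cc cx] /set_mem[c' Cc' c'y].
    have [d Cd [dx dy]] : exists2 d, C d & d.1 x /\ d.1 y.
      have [[cc' _]|[c'c _]] := totC c c' Cc Cc'.
        by exists c' => //; split=> //; apply: cc'.
      by exists c => //; split=> //; apply: c'c.
    rewrite -(gP d Cd x dx) -(gP d Cd y dy).
    by have [_ _] := Cgood d Cd; apply; apply: mem_set.
have [AD|/nonsubset[a [Aa Da]]] := pselect (A `<=` D).
  left; apply/card_le_injP; exists f; first by move=> x /AD /fB.
  by apply: sub_in2 finj => x; rewrite !inE; apply: AD.
have [BfD|/nonsubset[b [Bb fDb]]] := pselect (B `<=` f @` D).
  right; apply: card_le_trans (subset_card_le DA).
  by apply/pcard_geP/surjPex; exists f.
pose f' x := if x == a then b else f x.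
have f'D x : D x -> f' x = f x.
  by rewrite /f'; case: eqP => // -> /Da.
have good' : good (D `|` [set a], f').
  split=> /=; first by move=> x [/DA|->].
    by move=> x [Dx|->]; [rewrite f'D //; apply: fB | rewrite /f' eqxx].
  move=> x y /set_mem[Dx|->] /set_mem[Dy|->] //.
  - by rewrite !f'D //; apply: finj; rewrite inE.
  - by rewrite (f'D x Dx) /f' eqxx => fxb; exfalso; apply: fDb; exists x.
  - by rewrite (f'D y Dy) /f' eqxx => fyb; exfalso; apply: fDb; exists y.
have [] := Da; apply: (Dmax _ good'); last by right.
by split=> [x Dx|x Dx /=]; [left | rewrite f'D].
Qed.

Lemma card_le_setX {T1 T2} {U1 U2 : pointedType} (A1 : set T1) (A2 : set T2)
    (B1 : set U1) (B2 : set U2) :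
  A1 #<= B1 -> A2 #<= B2 -> A1 `*` A2 #<= B1 `*` B2.
Proof.
move=> /card_le_injP[f1 f1B f1i] /card_le_injP[f2 f2B f2i].
apply/(card_le_injP (U := (U1 * U2)%type)); exists (fun p => (f1 p.1, f2 p.2)).
  by move=> [x1 x2] [/= x1A x2A]; split; [apply: f1B | apply: f2B].
move=> [x1 x2] [y1 y2] /set_mem[/= x1A x2A] /set_mem[/= y1A y2A] [e1 e2].
rewrite (f1i _ _ (mem_set x1A) (mem_set y1A) e1).
by rewrite (f2i _ _ (mem_set x2A) (mem_set y2A) e2).
Qed.

Lemma card_setU_le {T} {U : pointedType} (A1 A2 : set T) (B : set U) :
  A1 #<= B -> A2 #<= B -> A1 `|` A2 #<= B `*` [set: bool].
Proof.
move=> /card_le_injP[f1 f1B f1i] /card_le_injP[f2 f2B f2i].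
apply/(card_le_injP (U := (U * bool)%type)).
exists (fun x => (if `[< A1 x >] then f1 x else f2 x, `[< A1 x >])).
  move=> x /= A12x; split=> //=.
  by case: asboolP => [/f1B //|A1x]; apply: f2B; case: A12x.
move=> x y /set_mem A12x /set_mem A12y [].
case: (asboolP (A1 x)) => A1x; case: (asboolP (A1 y)) => A1y // + _.
  by move/f1i; apply; apply: mem_set.
by move/f2i; apply; apply: mem_set; [case: A12x | case: A12y].
Qed.

Lemma card_setXbool_le {U : pointedType} (B : set U) :
  infinite_set B -> B `*` B #<= B -> B `*` [set: bool] #<= B.
Proof.
move=> /infiniteP natB BBB; apply: card_le_trans BBB.
apply: card_le_setX; first exact: card_lexx.
apply: card_le_trans natB; apply/(card_le_injP (U := nat)).
by exists nat_of_bool => // [] [] [].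
Qed.

Lemma card_setU_absorb {U : pointedType} (A B : set U) :
  infinite_set B -> B `*` B #<= B -> A #<= B -> B `|` A #<= B.
Proof.
move=> Binf BBB AB.
exact: card_le_trans (card_setU_le (card_lexx B) AB) (card_setXbool_le Binf BBB).
Qed.

Section pairing.
Variable T : pointedType.
Implicit Types (A B : set T) (f : T * T -> T).

Definition pairing_on B f := set_fun (B `*` B) B f /\ set_inj (B `*` B) f.

Lemma pairing_onP B : B `*` B #<= B <-> exists f, pairing_on B f.
Proof.
split=> [/(card_le_injP (U := T))[f ? ?]|[f [? ?]]]; first by exists f.
by apply/(card_le_injP (U := T)); exists f.
Qed.

Lemma infinite_pairing_sub A : infinite_set A ->
  exists B, [/\ B `<=` A, infinite_set B & exists f, pairing_on B f].
Proof.
move=> /infiniteP/(card_le_injP (U := T))[e eA einj].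
have eN : e @` setT #= [set: nat] := inj_card_eq einj.
have Ninf : [set: nat] #<= e @` setT by rewrite (card_le_eqr eN) card_lexx.
exists (e @` setT); split; first by move=> _ [n _ <-]; exact: eA.
  exact/infiniteP.
apply/pairing_onP; apply: card_le_trans Ninf.
by apply: countableX; exact: card_image_le.
Qed.

Lemma pairing_extend B f (i : T -> T) : infinite_set B -> pairing_on B f ->
  set_inj B i -> (forall t, B t -> ~ B (i t)) ->
  exists2 f', pairing_on (B `|` i @` B) f' & forall p, (B `*` B) p -> f p = f' p.
Proof.
(* B' := B `|` i @` B is no larger than B, so B' `*` B' injects into B; the
   new pairs are then sent into i @` B, which lies outside B. *)
move=> Binf [fB finj] iinj iB; set B' := B `|` i @` B.
have BBB : B `*` B #<= B by apply/pairing_onP; exists f.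
have B'B : B' #<= B := card_setU_absorb Binf BBB (card_image_le i B).
have /(card_le_injP (U := T))[g gB ginj] :=
  card_le_trans (card_le_setX B'B B'B) BBB.
exists (fun p => if `[< (B `*` B) p >] then f p else i (g p)); last first.
  by move=> p Bp; rewrite asboolT.
split=> [p B'p|p q /set_mem B'p /set_mem B'q].
  by case: asboolP => [/fB Bfp|_]; [left | right; exists (g p) => //; apply: gB].
case: asboolP => Bp; case: asboolP => Bq.
- by apply: finj; apply: mem_set.
- by move=> fpi; exfalso; apply: (iB (g q)); [apply: gB | rewrite -fpi; apply: fB].
- by move=> ifq; exfalso; apply: (iB (g p)); [apply: gB | rewrite ifq; apply: fB].
- move=> /iinj e; apply: ginj; rewrite ?inE //.
  by apply: e; apply: mem_set; apply: gB.
Qed.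

Lemma pairing_chain_union (C : set (set T * (T * T -> T))) g :
  (forall c, C c -> pairing_on c.1 c.2) ->
  total_on C (extends (fun B => B `*` B)) ->
  (forall c, C c -> forall p, (c.1 `*` c.1) p -> c.2 p = g p) ->
  pairing_on (\bigcup_(c in C) c.1) g.
Proof.
move=> Cpair totC gP; set U := \bigcup_(c in C) c.1.
have ub c c' : C c -> C c' -> exists2 d, C d & c.1 `<=` d.1 /\ c'.1 `<=` d.1.
  move=> Cc Cc'; have [[cc' _]|[c'c _]] := totC c c' Cc Cc'.
    by exists c' => //; split.
  by exists c => //; split.
have sq p : (U `*` U) p -> exists2 c, C c & (c.1 `*` c.1) p.
  move=> [[c Cc c1] [c' Cc' c'2]]; have [d Cd [cd c'd]] := ub c c' Cc Cc'.
  by exists d => //; split; [apply: cd | apply: c'd].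
split=> [p /sq[c Cc cp]|p q /set_mem/sq[c Cc cp] /set_mem/sq[c' Cc' c'q]].
  by rewrite -(gP c Cc p cp); exists c => //; have [+ _] := Cpair c Cc; apply.
have [d Cd [cd c'd]] := ub c c' Cc Cc'.
have dp := setSX cd cd cp; have dq := setSX c'd c'd c'q.
rewrite -(gP d Cd p dp) -(gP d Cd q dq).
by have [_] := Cpair d Cd; apply; apply: mem_set.
Qed.

End pairing.

Theorem infinite_card_setX_le T (A : set T) : infinite_set A -> A `*` A #<= A.
Proof.
elim/Ppointed: T => T in A *.
  by rewrite emptyE_subdef => /(_ (finite_set0 _)).
move=> Ainf.
pose good := [set p : set T * (T * T -> T) |
  [/\ p.1 `<=` A, infinite_set p.1 & pairing_on p.1 p.2]].
have [B0 [B0A B0inf [f0 f0pair]]] := infinite_pairing_sub Ainf.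
have [[B f] [/= BA Binf Bpair] Bmax] : exists2 p, good p &
    forall q, good q -> extends (fun B => B `*` B) p q -> q.1 `<=` p.1.
  apply: (@maximal_extension _ _ _ _ (fun _ _ BB' => setSX BB' BB') good (B0, f0))
    => //.
  move=> C g [c0 Cc0] Cgood totC gP; split.
  - by move=> x [c /Cgood[cA _ _] /cA].
  - have [_ c0inf _] := Cgood c0 Cc0.
    by apply: sub_infinite_set c0inf; exact: bigcup_sup.
  - by apply: pairing_chain_union gP => // c /Cgood[].
have BBB : B `*` B #<= B by apply/pairing_onP; exists f.
(* A maximal pairing B absorbs A: otherwise B injects into A `\` B, and the
   pairing extends to a strictly larger set. *)
have ADB : A `\` B #<= B.
  have [//|/(card_le_injP (U := T))[i iAB iinj]] := card_le_total (A `\` B) B.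
  have [f' f'pair ff'] := pairing_extend Binf Bpair iinj (fun t Bt => (iAB t Bt).2).
  have [b Bb] := infinite_setN0 Binf.
  have B'B : B `|` i @` B `<=` B.
    apply: (Bmax (_, f')); last by split=> /= [x Bx|]; [left | exact: ff'].
    split=> //=; last by apply: sub_infinite_set Binf => x Bx; left.
    by move=> x [/BA //|[t Bt <-]]; have [] := iAB t Bt.
  have [_ Bib] := iAB b Bb; exfalso; apply: Bib.
  by apply: B'B; right; exists b.
have AB : A #<= B by rewrite -(setDUK BA); exact: card_setU_absorb.
exact: card_le_trans (card_le_setX AB AB) (card_le_trans BBB (subset_card_le BA)).
Qed.

Local Open Scope ring_scope.

Definition eventually_neq (x y : nat -> nat) : Prop :=
  exists N, forall n, (N <= n)%N -> x n <> y n.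

Definition often_eq (x y : nat -> nat) : Prop :=
  forall N, exists n, (N <= n)%N /\ x n = y n.

Lemma not_often_eqP x y : ~ often_eq x y <-> eventually_neq x y.
Proof.
split=> [xy|[N xy] /(_ N)[n [Nn]]]; last exact: xy.
apply: contrapT => nxy; apply: xy => N; apply: contrapT => nN; apply: nxy.
by exists N => n Nn exy; apply: nN; exists n.
Qed.

Lemma finite_set_often_eq (G : set (nat -> nat)) :
  finite_set G -> exists x, forall y, G y -> often_eq x y.
Proof.
move=> /finite_fsetP[X ->]; set s := finmap.enum_fset X; pose k := size s.
exists (fun n => nth (fun=> 0%N) s (n %% k) n) => y sy N.
have ik : (index y s < k)%N by rewrite index_mem.
exists (N * k + index y s)%N; split; first by nia.
by rewrite modnMDl modn_small // nth_index.
Qed.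

Definition evens (x : nat -> nat) n := x (2 * n)%N.
Definition odds (x : nat -> nat) n := x (2 * n).+1.
Definition interleave (y z : nat -> nat) m := if odd m then z m./2 else y m./2.

Lemma eventually_neq_interleave x y z :
  eventually_neq (evens x) y -> eventually_neq (odds x) z ->
  eventually_neq x (interleave y z).
Proof.
move=> [N1 xy] [N2 xz]; exists (2 * (N1 + N2))%N => m Nm.
have := odd_double_half m; rewrite /interleave -mul2n.
case: (odd m) => /= mE; rewrite -{1}mE.
- by apply: xz; lia.
- by apply: xy; lia.
Qed.

Lemma often_eq_interleave x y z : often_eq x (interleave y z) ->
  often_eq (evens x) y \/ often_eq (odds x) z.
Proof.
move=> xyz; apply: contrapT => /not_orP[/not_often_eqP xy /not_often_eqP xz].
exact: (not_often_eqP _ _).2 (eventually_neq_interleave xy xz) xyz.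
Qed.

Section cardinal_characteristics.
Variable R : realType.
Implicit Types H : nat -> R.

Lemma d_family_infinite H G : d_family H G -> infinite_set G.
Proof.
move=> [_ Gcov] /finite_set_often_eq[x xG].
have [y [Gy xy]] := Gcov x.
exact: (not_often_eqP _ _).2 xy (xG y Gy).
Qed.

Lemma d_le_refl H : d_le H H.
Proof. by move=> G wG; exists G; split=> //; exact: card_lexx. Qed.

Lemma b_le_refl H : b_le H H.
Proof. by move=> F wF; exists F; split=> //; exact: card_lexx. Qed.

Lemma d_le_trans H1 H2 H3 : d_le H1 H2 -> d_le H2 H3 -> d_le H1 H3.
Proof.
move=> le12 le23 G3 /le23[G2 [w2 c23]]; have [G1 [w1 c12]] := le12 G2 w2.
by exists G1; split=> //; exact: card_le_trans c23.
Qed.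

Lemma b_le_trans H1 H2 H3 : b_le H1 H2 -> b_le H2 H3 -> b_le H1 H3.
Proof.
move=> le12 le23 F3 /le23[F2 [w2 c23]]; have [F1 [w1 c12]] := le12 F2 w2.
by exists F1; split=> //; exact: card_le_trans c23.
Qed.

Lemma d_le_of_le H1 H2 : (forall n, H1 n <= H2 n) -> d_le H2 H1.
Proof.
move=> le12 G [Gbd Gcov]; exists G; split; last exact: card_lexx.
by split=> // y Gy n; exact: lt_le_trans (Gbd y Gy n) (le12 n).
Qed.

Lemma b_le_of_le H1 H2 : (forall n, H1 n <= H2 n) -> b_le H1 H2.
Proof.
move=> le12 F Fcov; exists F; split; last exact: card_lexx.
by move=> y yH; apply: Fcov => n; exact: lt_le_trans (yH n) (le12 n).
Qed.

Lemma bounded_interleave H y z : {homo H : m n / (m <= n)%N >-> m <= n} ->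
  bounded_by (fun n => H (2 * n)%N) y -> bounded_by (fun n => H (2 * n)%N) z ->
  bounded_by H (interleave y z).
Proof.
move=> Hmono yH zH m; apply: (@lt_le_trans _ _ (H (2 * m./2)%N)).
  by rewrite /interleave; case: ifP => _; [exact: zH | exact: yH].
by apply: Hmono; rewrite mul2n -geq_half_double.
Qed.

Lemma d_le_double H : {homo H : m n / (m <= n)%N >-> m <= n} ->
  d_le H (fun n => H (2 * n)%N).
Proof.
move=> Hmono G [Gbd Gcov].
have GG : G `*` G #<= G.
  exact/infinite_card_setX_le/(d_family_infinite (conj Gbd Gcov)).
exists ((fun p => interleave p.1 p.2) @` (G `*` G)); split; last first.
  exact: card_le_trans (card_image_le _ _) GG.
split=> [_ [[y z] [/= Gy Gz] <-]|x].
  exact: bounded_interleave (Gbd y Gy) (Gbd z Gz).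
have [y [Gy xy]] := Gcov (evens x); have [z [Gz xz]] := Gcov (odds x).
exists (interleave y z); split; first by exists (y, z).
exact: eventually_neq_interleave.
Qed.

Lemma b_le_double H : {homo H : m n / (m <= n)%N >-> m <= n} ->
  b_le (fun n => H (2 * n)%N) H.
Proof.
move=> Hmono F Fcov.
suff [Fe|Fo] : b_family (fun n => H (2 * n)%N) (evens @` F) \/
               b_family (fun n => H (2 * n)%N) (odds @` F).
- by exists (evens @` F); split=> //; exact: card_image_le.
- by exists (odds @` F); split=> //; exact: card_image_le.
apply: contrapT => /not_orP[/existsNP[y /not_implyP[yH ny]]
                           /existsNP[z /not_implyP[zH nz]]].
have [x [Fx /often_eq_interleave[xy|xz]]] :=
  Fcov _ (bounded_interleave Hmono yH zH).
- by apply: ny; exists (evens x); split=> //; exists x.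
- by apply: nz; exists (odds x); split=> //; exists x.
Qed.

Lemma dilate_pow2_le H j : {homo H : m n / (m <= n)%N >-> m <= n} ->
  d_le H (fun n => H (2 ^ j * n)%N) /\ b_le (fun n => H (2 ^ j * n)%N) H.
Proof.
move=> Hmono; elim: j => [|j [IHd IHb]].
  have -> : (fun n => H (2 ^ 0 * n)%N) = H by apply: funext => n; rewrite mul1n.
  by split; [exact: d_le_refl | exact: b_le_refl].
have Hjmono : {homo (fun n => H (2 ^ j * n)%N) : m n / (m <= n)%N >-> m <= n}.
  by move=> m n mn; apply: Hmono; rewrite leq_mul2l mn orbT.
have -> : (fun n => H (2 ^ j.+1 * n)%N) = (fun n => H (2 ^ j * (2 * n))%N).
  by apply: funext => n; rewrite expnSr mulnA.
split; first exact: d_le_trans IHd (d_le_double Hjmono).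
exact: b_le_trans (b_le_double Hjmono) IHb.
Qed.

End cardinal_characteristics.

Section double_exponential.
Variable R : realType.

Definition double_exp (a : R) (n : nat) : R := 2 `^ (a ^+ n).

Lemma double_exp_homo a : 1 < a ->
  {homo double_exp a : m n / (m <= n)%N >-> m <= n}.
Proof.
move=> a1 m n mn; apply: ler_powR; first by rewrite ler1n.
by apply: ler_weXn2l => //; exact: ltW.
Qed.

Lemma bernoulli_ineq (a : R) n : 1 <= a -> 1 + n%:R * (a - 1) <= a ^+ n.
Proof.
move=> a1; elim: n => [|n IH]; first by rewrite mul0r addr0 expr0.
have : 0 <= n%:R * (a - 1) by apply: mulr_ge0; rewrite ?subr_ge0.
by rewrite exprS -natr1; nra.
Qed.

Lemma expr_pow2_ge (a b : R) : 1 < a -> exists j, b <= a ^+ (2 ^ j).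
Proof.
move=> a1; have a0 : 0 < a - 1 by rewrite subr_gt0.
exists (Num.truncn (b / (a - 1))).+1.
have := truncnS_gt (b / (a - 1)); rewrite ltr_pdivrMr // => /ltW/le_trans; apply.
apply: le_trans (ler_weXn2l (ltW a1) (ltnW (ltn_expl _ (ltnSn 1)))).
by apply: le_trans (bernoulli_ineq _ (ltW a1)); lra.
Qed.

Lemma double_exp_le a b : 1 < a -> 1 < b ->
  d_le (double_exp a) (double_exp b) /\ b_le (double_exp b) (double_exp a).
Proof.
move=> a1 b1; have [j bj] := expr_pow2_ge b a1.
have ba n : double_exp b n <= double_exp a (2 ^ j * n)%N.
  apply: ler_powR; first by rewrite ler1n.
  by rewrite exprM; apply: lerXn2r => //; rewrite nnegrE; lra.
have [dj bj'] := dilate_pow2_le j (double_exp_homo a1).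
split; first exact: d_le_trans dj (d_le_of_le ba).
exact: b_le_trans (b_le_of_le ba) bj'.
Qed.

End double_exponential.

Theorem mainTheorem7 (R : realType) :
  (forall h : nat -> nat,
     (forall n : nat, (2 <= h n)%N) ->
     (forall m n : nat, (m <= n)%N -> (h m <= h n)%N) ->
     let H := fun n : nat => ((h n)%:R : R) in
     let G := fun n : nat => ((h (2 * n)%N)%:R : R) in
     d_eq H G /\ b_eq H G)
  /\
  (forall a b : R, 1 < a -> 1 < b ->
     let Ha := fun n : nat => (2 : R) `^ (a ^+ n) in
     let Hb := fun n : nat => (2 : R) `^ (b ^+ n) in
     d_eq Ha Hb /\ b_eq Ha Hb).
Proof.
split=> [h _ hmono H G | a b a1 b1 Ha Hb].
  have Hmono : {homo H : m n / (m <= n)%N >-> m <= n}.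
    by move=> m n mn; rewrite ler_nat hmono.
  have HG n : H n <= G n by rewrite ler_nat hmono // leq_pmull.
  split; split.
  - exact: d_le_double.
  - exact: d_le_of_le.
  - exact: b_le_of_le.
  - exact: b_le_double.
have [dab bba] := double_exp_le a1 b1.
have [dba bab] := double_exp_le b1 a1.
by split; split.
Qed.
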